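(* Let $\mathbb{L}$ be a complete, algebraically closed non-Archimedean field of characteristic $0$ and let $\phi$ be a rational map over $\mathbb{L}$ of degree $\geq 2$ having good reduction. Let $\vec v$ be a direction at the Gauss point $\zeta_{Gauss}$ which, viewed as a point of $\mathbb{P}^1(\tilde{\mathbb{L}})$, is a fixed critical point of the reduction $\tilde\phi$. Let $\xi$ be a fixed point of $\phi$ lying in the open Berkovich disk $B_{\vec v}$ (the component of $\mathbb{P}^1_{an}\setminus\{\zeta_{Gauss}\}$ corresponding to $\vec v$). Then $\xi$ is of type $1$, i.e. $\xi\in\mathbb{P}^1(\mathbb{L})$.
   Context: $\mathbb{P}^1_{an}$ is the Berkovich projective line over $\mathbb{L}$; $\zeta_{Gauss}$ is the type $2$ point corresponding to the closed unit disk $D(0,1)$. Directions at $\zeta_{Gauss}$ (connected components of $\mathbb{P}^1_{an}\setminus\{\zeta_{Gauss}\}$) are identified with $\mathbb{P}^1(\tilde{\mathbb{L}})$, $\tilde{\mathbb{L}}$ the residue field, the direction containing $a\in\mathbb{P}^1(\mathbb{L})$ corresponding to its reduction $\tilde a$. The reduction $\tilde\phi$ is obtained by reducing a normalized form of $\phi$ (coprime numerator/denominator, coefficients in the valuation ring, not all in the maximal ideal) modulo the maximal ideal and cancelling common factors; good reduction means $\deg\tilde\phi=\deg\phi$. A critical point of $\tilde\phi$ is a point where $\tilde\phi$ has multiplicity at least $2$. *)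

From HB Require Import structures.
From mathcomp Require Import all_boot all_order all_algebra.
From mathcomp Require Import reals.
From mathcomp.multinomials Require Export mpoly.

Set Implicit Arguments.
Unset Strict Implicit.
Unset Printing Implicit Defensive.

Import Order.TTheory GRing.Theory Num.Theory.
Local Open Scope ring_scope.

Section Berkovich.
Variables (R : realType) (L : fieldType) (abs : L -> R).

Definition nonarch_abs : Prop :=
  [/\ forall x, 0 <= abs x,
      forall x, abs x = 0 <-> x = 0,
      forall x y, abs (x * y) = abs x * abs y &
      forall x y, abs (x + y) <= Num.max (abs x) (abs y)].

Definition abs_complete : Prop :=
  forall u : nat -> L,
    (forall e : R, 0 < e -> exists N : nat, forall m n : nat,
        (N <= m)%N -> (N <= n)%N -> abs (u m - u n) < e) ->
    exists l : L, forall e : R, 0 < e -> exists N : nat, forall n : nat,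
        (N <= n)%N -> abs (u n - l) < e.

(** Homogeneous coordinates: L[X,Y] = {mpoly L[2]}. *)
Definition varX : {mpoly L[2]} := 'X_(@Ordinal 2 0 isT).
Definition varY : {mpoly L[2]} := 'X_(@Ordinal 2 1 isT).

Definition integral_mpoly (P : {mpoly L[2]}) : Prop :=
  forall m, abs P@_m <= 1.

(** P and Q have the same reduction modulo the maximal ideal {|c| < 1}. *)
Definition red_eq (P Q : {mpoly L[2]}) : Prop :=
  forall m, abs (P - Q)@_m < 1.

Definition rat_map_lift (d : nat) (F1 F2 : {mpoly L[2]}) : Prop :=
  [/\ F1 \is d.-homog, F2 \is d.-homog &
      forall D Q1 Q2 : {mpoly L[2]}, F1 = D * Q1 -> F2 = D * Q2 ->
        D = (D@_0%MM)%:MP].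

Definition normalized_lift (F1 F2 : {mpoly L[2]}) : Prop :=
  [/\ integral_mpoly F1, integral_mpoly F2 &
      exists m, abs F1@_m = 1 \/ abs F2@_m = 1].

(** Good reduction: the reductions of F1, F2 (polynomials over the residue
    field) have no nonconstant common factor, i.e. nothing cancels and the
    reduction has the same degree d.  Any factorisation over the residue
    field lifts to one with coefficients in O. *)
Definition good_reduction (F1 F2 : {mpoly L[2]}) : Prop :=
  forall D Q1 Q2 : {mpoly L[2]},
    integral_mpoly D -> integral_mpoly Q1 -> integral_mpoly Q2 ->
    red_eq F1 (D * Q1) -> red_eq F2 (D * Q2) ->
    forall m, m != 0%MM -> abs D@_m < 1.

(** (a : b) is a normalized lift of a point of P^1(residue field),
    i.e. of a direction at the Gauss point. *)
Definition direction_lift (a b : L) : Prop :=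
  abs a <= 1 /\ abs b <= 1 /\ Num.max (abs a) (abs b) = 1.

(** The reduction of phi = [F1 : F2] fixes the residue point (a~ : b~) with
    multiplicity >= 2: the linear form (b~ X - a~ Y) divides the fibre
    polynomial b~ F1~ - a~ F2~ to order at least 2 over the residue field. *)
Definition fixed_critical_red (F1 F2 : {mpoly L[2]}) (a b : L) : Prop :=
  exists Q : {mpoly L[2]}, integral_mpoly Q /\
    red_eq (b *: F1 - a *: F2) ((b *: varX - a *: varY) ^+ 2 * Q).

(** Berkovich projective line (Baker--Rumely, Sec. 2.2): multiplicative
    seminorms on L[X,Y] extending abs and not identically zero on (X,Y),
    up to the equivalence [G]_1 = C^deg G [G]_2 on homogeneous G. *)
Definition mult_seminorm (s : {mpoly L[2]} -> R) : Prop :=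
  [/\ forall f, 0 <= s f,
      forall f g, s (f * g) = s f * s g,
      forall f g, s (f + g) <= s f + s g &
      forall c, s c%:MP = abs c].

Definition berk_point (s : {mpoly L[2]} -> R) : Prop :=
  mult_seminorm s /\ exists f : {mpoly L[2]}, f@_0%MM = 0 /\ s f != 0.

Definition berk_equiv (s1 s2 : {mpoly L[2]} -> R) : Prop :=
  exists C : R, 0 < C /\
    forall (n : nat) (G : {mpoly L[2]}), G \is n.-homog -> s1 G = C ^+ n * s2 G.

Definition berk_push (F1 F2 : {mpoly L[2]}) (s : {mpoly L[2]} -> R) :
  {mpoly L[2]} -> R := fun G => s (G \mPo [tuple F1; F2]).

Definition berk_fixed (F1 F2 : {mpoly L[2]}) (s : {mpoly L[2]} -> R) : Prop :=
  berk_equiv (berk_push F1 F2 s) s.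

(** The open Berkovich disk B_v, v = (a~ : b~): the residue class at the
    Gauss point of the classical points reducing to (a~ : b~). *)
Definition in_direction (a b : L) (s : {mpoly L[2]} -> R) : Prop :=
  s (b *: varX - a *: varY) < Num.max (s varX) (s varY).

Definition eval_seminorm (x y : L) : {mpoly L[2]} -> R :=
  fun G => abs G.@[fun i : 'I_2 => if val i == 0%N then x else y].

Definition type1_point (s : {mpoly L[2]} -> R) : Prop :=
  exists x y : L, (x != 0 \/ y != 0) /\ berk_equiv s (eval_seminorm x y).

End Berkovich.

(* The fixed point [s] is an ultrametric multiplicative seminorm with
   [s (G o (Fi, Fj)) = C ^ deg G * s G].  Work in the affine chart [X_j = 1]
   containing the direction, with residue point [c0] and [S = s X_j].  Good
   reduction makes [Fj (c0, 1)] a unit, whence [s Fj = S ^ d] and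
   [C = S ^ (d - 1)].  As the reduction fixes [c0] with multiplicity at least 2,
   the fixed-point polynomial [Fi (z, 1) - z Fj (z, 1)] has a root [c] with
   [|c - c0| < 1]: otherwise its absolute value would be constant on that disc,
   which the double root rules out (this is where algebraic closedness is used).
   Then [Fi - c Fj = (X_i - c X_j) K] with [s K < S ^ (d - 1)], again by the
   double root, while [s (Fi - c Fj) = S ^ (d - 1) s (X_i - c X_j)].  Hence
   [s (X_i - c X_j) = 0], so [s G = S ^ deg G * |G (c, 1)|] for homogeneous [G]:
   [s] is the type 1 point [(c : 1)]. *)

From HB Require Import structures.
From mathcomp Require Import all_boot all_order all_algebra.
From mathcomp Require Import reals.
From mathcomp Require Import ring lra.
From mathcomp.multinomials Require Import mpoly.
Import Order.TTheory GRing.Theory Num.Theory.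
Local Open Scope ring_scope.

Section NonArchimedeanAbs.
Context {R : realType} {L : fieldType} {abs : L -> R}.
Hypothesis abs_na : nonarch_abs abs.

Lemma abs_ge0 x : 0 <= abs x. Proof. by case: abs_na. Qed.
Lemma abs_eq0 x : abs x = 0 -> x = 0. Proof. by case: abs_na => _ /(_ x) [+ _ _ _]. Qed.
Lemma abs0 : abs 0 = 0. Proof. by case: abs_na => _ /(_ 0) [_ ->]. Qed.
Lemma absM x y : abs (x * y) = abs x * abs y. Proof. by case: abs_na. Qed.
Lemma absD_max x y : abs (x + y) <= Num.max (abs x) (abs y).
Proof. by case: abs_na. Qed.

Lemma abs1 : abs 1 = 1.
Proof.
have abs1_neq0 : abs 1 != 0 by apply/eqP => /abs_eq0/eqP; rewrite oner_eq0.
by apply: (mulfI abs1_neq0); rewrite -absM !mulr1.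
Qed.

Lemma absN x : abs (- x) = abs x.
Proof.
suff absN1 : abs (-1) = 1 by rewrite -mulN1r absM absN1 mul1r.
have := absM (-1) (-1); rewrite mulrNN mulr1 abs1.
have := abs_ge0 (-1); nra.
Qed.

Lemma absB_max x y : abs (x - y) <= Num.max (abs x) (abs y).
Proof. by rewrite -(absN y) absD_max. Qed.

Lemma absX x k : abs (x ^+ k) = abs x ^+ k.
Proof. by elim: k => [|k IH]; rewrite ?abs1 // !exprS absM IH. Qed.

Lemma abs_prod (I : Type) (r : seq I) (F : I -> L) :
  abs (\prod_(i <- r) F i) = \prod_(i <- r) abs (F i).
Proof. exact: (big_morph abs absM abs1). Qed.

Lemma abs_sum_le (I : Type) (r : seq I) (P : pred I) (F : I -> L) (B : R) :
  0 <= B -> (forall i, P i -> abs (F i) <= B) -> abs (\sum_(i <- r | P i) F i) <= B.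
Proof.
move=> B_ge0 F_le; elim/big_ind: _ => //; first by rewrite abs0.
by move=> x y x_le y_le; apply: le_trans (absD_max _ _) _; rewrite ge_max x_le y_le.
Qed.

Lemma abs_natr_le1 k : abs k%:R <= 1.
Proof.
elim: k => [|k IH]; first by rewrite abs0.
rewrite -natr1; apply: le_trans (absD_max _ _) _.
by rewrite ge_max IH abs1 lexx.
Qed.

Lemma absD_small x y : abs x < abs y -> abs (x + y) = abs y.
Proof.
move=> x_lt_y; apply/eqP; rewrite eq_le.
rewrite (le_trans (absD_max _ _)) ?ge_max ?(ltW x_lt_y) //=.
have := absB_max (x + y) x; rewrite addrC addKr le_max => /orP[//|].
by rewrite leNgt x_lt_y.
Qed.

Lemma abs_neq0 {x} : abs x = 1 -> x != 0.
Proof. by move=> x1; apply: contra_eq_neq x1 => ->; rewrite abs0 eq_sym oner_neq0. Qed.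

Lemma absV_unit u : abs u = 1 -> abs u^-1 = 1.
Proof.
move=> u1; have := absM u u^-1.
by rewrite mulfV ?abs_neq0 // abs1 u1 mul1r.
Qed.

End NonArchimedeanAbs.

Lemma bernoulli_ineq {R : realFieldType} (h : R) n :
  0 <= h -> 1 + n%:R * h <= (1 + h) ^+ n.
Proof.
move=> h_ge0; elim: n => [|n IH]; first by rewrite mul0r addr0 expr0.
rewrite exprS -natr1; have := ler_wpM2l (addr_ge0 ler01 h_ge0) IH.
have : 0 <= n%:R * h ^+ 2 by rewrite mulr_ge0 ?sqr_ge0.
rewrite expr2; nra.
Qed.

(* Since [(N + 1) ^ (1 / N) -> 1]. *)
Lemma le_of_exprn_le (R : realType) (x M : R) : 0 <= x -> 0 <= M ->
  (forall N : nat, x ^+ N <= N.+1%:R * M ^+ N) -> x <= M.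
Proof.
move=> x_ge0 M_ge0 xN_le; rewrite leNgt; apply/negP => M_lt_x.
have M_gt0 : 0 < M.
  rewrite lt_def M_ge0 andbT; apply: contra_ltN M_lt_x => /eqP M0.
  by have := xN_le 1%N; rewrite !expr1 M0 mulr0.
pose h := x / M - 1.
have h_gt0 : 0 < h by rewrite subr_gt0 ltr_pdivlMr // mul1r.
have qN_le N : (1 + h) ^+ N <= N.+1%:R.
  by rewrite addrC subrK expr_div_n ler_pdivrMr ?exprn_gt0.
have h2_gt0 : 0 < h ^+ 2 by rewrite exprn_gt0.
pose n := Num.Def.archi_bound (3 / h ^+ 2).
have n_large : 3 / h ^+ 2 < n%:R by apply: archi_boundP; rewrite divr_ge0 // ltW.
have nh2 : 3 < n%:R * h ^+ 2 by rewrite -ltr_pdivrMr.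
have := qN_le (n + n)%N; rewrite exprD -expr2 -natr1 natrD.
have := bernoulli_ineq h n (ltW h_gt0); have := ler0n R n.
have : 0 <= n%:R * h by rewrite mulr_ge0 // ltW.
rewrite expr2 in nh2 *; nra.
Qed.

Section MultSeminorm.
Context {R : realType} {L : fieldType} {abs : L -> R}.
Hypothesis abs_na : nonarch_abs abs.
Context {s : {mpoly L[2]} -> R}.
Hypothesis s_ms : mult_seminorm abs s.

Lemma sn_ge0 f : 0 <= s f. Proof. by case: s_ms. Qed.
Lemma snM f g : s (f * g) = s f * s g. Proof. by case: s_ms. Qed.
Lemma snD f g : s (f + g) <= s f + s g. Proof. by case: s_ms. Qed.
Lemma snC c : s c%:MP = abs c. Proof. by case: s_ms. Qed.
Lemma sn0 : s 0 = 0. Proof. by rewrite -mpolyC0 snC abs0. Qed.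
Lemma sn1 : s 1 = 1. Proof. by rewrite -mpolyC1 snC abs1. Qed.
Lemma snZ c f : s (c *: f) = abs c * s f. Proof. by rewrite -mul_mpolyC snM snC. Qed.
Lemma snN f : s (- f) = s f. Proof. by rewrite -scaleN1r snZ absN ?abs1 ?mul1r. Qed.
Lemma snX f k : s (f ^+ k) = s f ^+ k.
Proof. by elim: k => [|k IH]; rewrite ?sn1 // !exprS snM IH. Qed.

Lemma sn_sum (I : Type) (r : seq I) (P : pred I) (F : I -> {mpoly L[2]}) :
  s (\sum_(i <- r | P i) F i) <= \sum_(i <- r | P i) s (F i).
Proof.
apply: (big_ind2 (fun f x => s f <= x)) => //; first by rewrite sn0.
by move=> f1 x1 f2 x2 le1 le2; apply: le_trans (snD _ _) (lerD le1 le2).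
Qed.

(* Binomial expansion: [s (f + g) ^ N <= (N + 1) max (s f, s g) ^ N], since
   binomial coefficients are integers and have absolute value at most 1. *)
Lemma snD_max f g : s (f + g) <= Num.max (s f) (s g).
Proof.
set M := Num.max _ _.
have [f_le g_le] : s f <= M /\ s g <= M by rewrite /M !le_max !lexx ?orbT.
have M_ge0 : 0 <= M := le_trans (sn_ge0 f) f_le.
apply: le_of_exprn_le => [|//|N]; first exact: sn_ge0.
rewrite -snX exprDn; apply: le_trans (sn_sum _ _ _ _) _.
have -> : N.+1%:R * M ^+ N = \sum_(k < N.+1) M ^+ N.
  by rewrite sumr_const card_ord mulr_natl.
apply: ler_sum => k _; rewrite -mulr_natr !snM !snX -mpolyC_nat snC.
have k_le : (k <= N)%N by rewrite -ltnS.
have -> : M ^+ N = M ^+ (N - k) * M ^+ k * 1 by rewrite mulr1 -exprD subnK.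
apply: ler_pM; rewrite ?mulr_ge0 ?exprn_ge0 ?sn_ge0 ?abs_ge0 ?abs_natr_le1 //.
by apply: ler_pM; rewrite ?exprn_ge0 ?sn_ge0 //; apply: lerXn2r; rewrite ?nnegrE ?sn_ge0.
Qed.

Lemma snB_max f g : s (f - g) <= Num.max (s f) (s g).
Proof. by rewrite -(snN g) snD_max. Qed.

Lemma sn_sum_le (I : Type) (r : seq I) (P : pred I) (F : I -> {mpoly L[2]}) (B : R) :
  0 <= B -> (forall i, P i -> s (F i) <= B) -> s (\sum_(i <- r | P i) F i) <= B.
Proof.
move=> B_ge0 F_le; elim/big_ind: _ => //; first by rewrite sn0.
by move=> f g f_le g_le; apply: le_trans (snD_max _ _) _; rewrite ge_max f_le g_le.
Qed.

Lemma snD_small f g : s f < s g -> s (f + g) = s g.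
Proof.
move=> f_lt_g; apply/eqP; rewrite eq_le.
rewrite (le_trans (snD_max _ _)) ?ge_max ?(ltW f_lt_g) //=.
have := snB_max (f + g) f; rewrite addrC addKr le_max => /orP[//|].
by rewrite leNgt f_lt_g.
Qed.

Lemma snD_null f g : s f = 0 -> s (f + g) = s g.
Proof.
move=> f0; have [g0|g_gt0] := eqVneq (s g) 0; last first.
  by apply: snD_small; rewrite f0 lt_def g_gt0 sn_ge0.
apply/eqP; rewrite g0 eq_le sn_ge0 andbT.
by apply: le_trans (snD_max _ _) _; rewrite f0 g0 maxxx.
Qed.

End MultSeminorm.

Lemma big_ord2_neq {T : Type} {idx : T} {op : Monoid.com_law idx} (F : 'I_2 -> T)
    {i j : 'I_2} :
  i != j -> \big[op/idx]_(k < 2) F k = op (F i) (F j).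
Proof.
rewrite !big_ord_recl big_ord0 Monoid.mulm1.
case: i j => [[|[|//]] ?] [[|[|//]] ?] //= _; last rewrite Monoid.mulmC;
  by congr (op (F _) (F _)); apply: val_inj.
Qed.

Definition coef_le {R : realType} {L : fieldType} (abs : L -> R) (g : R)
    (P : {mpoly L[2]}) : Prop :=
  forall m, abs P@_m <= g.

Section CoefBound.
Context {R : realType} {L : fieldType} {abs : L -> R}.
Hypothesis abs_na : nonarch_abs abs.
Local Notation MP := {mpoly L[2]}.

Lemma coef_le_ge0 {g P} : coef_le abs g P -> 0 <= g.
Proof. by move=> P_le; apply: le_trans (abs_ge0 abs_na _) (P_le 0%MM). Qed.

Lemma coef_leW {g g' P} : g <= g' -> coef_le abs g P -> coef_le abs g' P.
Proof. by move=> g_le P_le m; apply: le_trans (P_le m) g_le. Qed.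

Lemma coef_leD {g P Q} : coef_le abs g P -> coef_le abs g Q -> coef_le abs g (P + Q).
Proof.
move=> P_le Q_le m; rewrite mcoeffD; apply: le_trans (absD_max abs_na _ _) _.
by rewrite ge_max P_le Q_le.
Qed.

Lemma coef_leB {g P Q} : coef_le abs g P -> coef_le abs g Q -> coef_le abs g (P - Q).
Proof. by move=> P_le Q_le; apply: coef_leD => // m; rewrite mcoeffN absN. Qed.

Lemma coef_leZ {g} c {P} : coef_le abs g P -> coef_le abs (abs c * g) (c *: P).
Proof. by move=> P_le m; rewrite mcoeffZ absM // ler_wpM2l ?abs_ge0. Qed.

Lemma coef_leZ1 {g c P} : abs c <= 1 -> coef_le abs g P -> coef_le abs g (c *: P).
Proof.
move=> c_le P_le; apply: coef_leW (coef_leZ c P_le).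
by rewrite ler_piMl ?(coef_le_ge0 P_le).
Qed.

Lemma coef_le_sum (I : Type) (r : seq I) (P : pred I) (F : I -> MP) g :
  0 <= g -> (forall k, P k -> coef_le abs g (F k)) ->
  coef_le abs g (\sum_(k <- r | P k) F k).
Proof.
move=> g_ge0 F_le; elim/big_ind: _ => //; last by move=> ? ?; apply: coef_leD.
by move=> m; rewrite mcoeff0 abs0.
Qed.

Lemma coef_leM {g1 g2 P Q} :
  coef_le abs g1 P -> coef_le abs g2 Q -> coef_le abs (g1 * g2) (P * Q).
Proof.
move=> P_le Q_le m; rewrite mcoeffM; apply: (abs_sum_le abs_na) => [|k _].
  exact: mulr_ge0 (coef_le_ge0 P_le) (coef_le_ge0 Q_le).
by rewrite absM // ler_pM ?abs_ge0.
Qed.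

Lemma coef_le1M {g P Q} : coef_le abs 1 P -> coef_le abs g Q -> coef_le abs g (P * Q).
Proof. by move=> P_le Q_le; rewrite -[g]mul1r; apply: coef_leM. Qed.

Lemma coef_le_monomial m : coef_le abs 1 ('X_[m] : MP).
Proof. by move=> k; rewrite mcoeffX abs_natr_le1. Qed.

Lemma coef_le_Xn k n : coef_le abs 1 (('X_k : MP) ^+ n).
Proof. by rewrite mpolyXn; apply: coef_le_monomial. Qed.

Lemma coef_le_pihomog {g} k {P} : coef_le abs g P -> coef_le abs g (pihomog mdeg k P).
Proof.
move=> P_le; rewrite pihomogE.
apply: coef_le_sum => [|m _]; first exact: coef_le_ge0 P_le.
by apply: coef_leW (coef_leZ _ (coef_le_monomial m)); rewrite mulr1.
Qed.

Lemma coef_lt1_bound {P} : (forall m, abs P@_m < 1) ->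
  exists2 e, abs e < 1 & coef_le abs (abs e) P.
Proof.
move=> P_lt1.
suff [e e_lt1 e_ge] : exists2 e, abs e < 1 & forall m, m \in msupp P -> abs P@_m <= abs e.
  exists e => // m; have [/e_ge //|m_out] := boolP (m \in msupp P).
  by rewrite memN_msupp_eq0 // abs0 // abs_ge0.
elim: (msupp P) => [|m0 ms [e e_lt1 e_ge]]; first by exists 0; rewrite abs0.
have [m0_le|e_lt] := lerP (abs P@_m0) (abs e).
  by exists e => // m; rewrite inE => /predU1P[->|/e_ge].
exists P@_m0 => // m; rewrite inE => /predU1P[->//|/e_ge m_le].
exact: le_trans m_le (ltW e_lt).
Qed.

End CoefBound.

Lemma pihomogMl {n : nat} {T : comNzRingType} (k l : nat) (H P : {mpoly T[n]}) :
  H \is k.-homog -> pihomog mdeg (k + l) (H * P) = H * pihomog mdeg l P.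
Proof.
move=> H_homog; rewrite {1 2}[P]mpolyE mulr_sumr !raddf_sum /= mulr_sumr.
apply: eq_bigr => m _; rewrite -scalerAr !linearZ /= pihomogX -scalerAr.
have HX_homog : H * 'X_[m] \is (k + mdeg m).-homog by rewrite dhomogM ?dhomogX.
case: eqP => [<-|/eqP ne_mn]; first by rewrite pihomog_dE.
by rewrite mulr0 (pihomog_ne0 _ HX_homog) // eqn_add2l.
Qed.

Section Reduction.
Context {R : realType} {L : fieldType} {abs : L -> R}.
Hypothesis abs_na : nonarch_abs abs.
Local Notation MP := {mpoly L[2]}.

Lemma red_eq_unscale {u} {P Q : MP} : abs u = 1 -> red_eq abs (u *: P) (u *: Q) ->
  red_eq abs P Q.
Proof.
move=> u1 uPQ m; have := uPQ m.
by rewrite -scalerBr mcoeffZ (absM abs_na) u1 mul1r.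
Qed.

Lemma homog_red_decomp {k n} {F H Q : MP} :
  F \is (k + n).-homog -> H \is k.-homog -> integral_mpoly abs Q -> red_eq abs F (H * Q) ->
  exists Q0 E0 (e : L), [/\ integral_mpoly abs Q0, Q0 \is n.-homog,
    E0 \is (k + n).-homog, abs e < 1 & coef_le abs (abs e) E0 /\ F = H * Q0 + E0].
Proof.
move=> F_homog H_homog Q_int FHQ; have [e e_lt1 E_le] := coef_lt1_bound abs_na FHQ.
exists (pihomog mdeg n Q), (pihomog mdeg (k + n) (F - H * Q)), e; split.
- exact: (coef_le_pihomog abs_na _ Q_int).
- exact: pihomogP.
- exact: pihomogP.
- exact: e_lt1.
split; first exact: (coef_le_pihomog abs_na _ E_le).
rewrite raddfB /=.
have -> : pihomog mdeg (k + n) F = F by rewrite pihomog_dE.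
by rewrite pihomogMl // addrC subrK.
Qed.

End Reduction.

Lemma eval_seminorm_ms {R : realType} {L : fieldType} {abs : L -> R} (v : 'I_2 -> L) :
  nonarch_abs abs -> mult_seminorm abs (fun P => abs P.@[v]).
Proof.
move=> abs_na; split=> [P|P Q|P Q|c]; rewrite ?abs_ge0 ?mevalM ?absM ?mevalC //.
rewrite mevalD; apply: le_trans (absD_max abs_na _ _) _.
by rewrite ge_max !(lerDl, lerDr) !abs_ge0.
Qed.

Section Chart.
Context {R : realType} {L : fieldType} {abs : L -> R}.
Hypothesis abs_na : nonarch_abs abs.
Local Notation MP := {mpoly L[2]}.
Context {i j : 'I_2}.
Hypothesis neq_ij : i != j.
Local Notation lin c := ('X_i - c *: 'X_j : MP).

Definition chart_pt (c : L) : 'I_2 -> L := fun k => if k == i then c else 1.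

Lemma chart_pt_i c : chart_pt c i = c. Proof. by rewrite /chart_pt eqxx. Qed.
Lemma chart_pt_j c : chart_pt c j = 1.
Proof. by rewrite /chart_pt eq_sym (negbTE neq_ij). Qed.

Lemma monomial2E (m : 'X_{1..2}) : 'X_[m] = ('X_i : MP) ^+ m i * 'X_j ^+ m j.
Proof.
by rewrite mpolyXE_id (big_ord2_neq (fun k => ('X_k : MP) ^+ m k) neq_ij).
Qed.

Lemma mdeg2E (m : 'X_{1..2}) : mdeg m = (m i + m j)%N.
Proof. by rewrite mdegE (big_ord2_neq (fun k => m k) neq_ij). Qed.

Lemma meval_chart c P : P.@[chart_pt c] = \sum_(m <- msupp P) P@_m * c ^+ m i.
Proof.
rewrite mevalE; apply: eq_bigr => m _.
rewrite (big_ord2_neq (fun k => chart_pt c k ^+ m k) neq_ij) /=.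
by rewrite chart_pt_i chart_pt_j expr1n mulr1.
Qed.

Lemma meval_lin c z : (lin c).@[chart_pt z] = z - c.
Proof. by rewrite mevalB mevalZ !mevalXU chart_pt_i chart_pt_j mulr1. Qed.

Lemma meval_scaleXjn a n z : (a *: ('X_j : MP) ^+ n).@[chart_pt z] = a.
Proof. by rewrite mevalZ rmorphXn /= mevalXU chart_pt_j expr1n mulr1. Qed.

Lemma lin_homog c : lin c \is 1.-homog.
Proof. by rewrite rpredB ?rpredZ // dhomogX /= mdeg1. Qed.

Lemma coef_le_lin {c} : abs c <= 1 -> coef_le abs 1 (lin c).
Proof.
move=> c_le; apply: (coef_leB abs_na); last apply: (coef_leZ1 abs_na c_le);
  exact: coef_le_monomial.
Qed.

Lemma lin_coef_Xi c : (lin c)@_U_(i) = 1.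
Proof.
by rewrite mcoeffB mcoeffZ !mcoeffXU eqxx eq_sym (negbTE neq_ij) mulr0 subr0.
Qed.

Lemma lin_neq0 c : lin c != 0.
Proof. by apply: contra_eq_neq (lin_coef_Xi c) => ->; rewrite mcoeff0 eq_sym oner_neq0. Qed.

(* Quotient of [P] by [X_i - c X_j], from [X_i^k - (c X_j)^k = (X_i - c X_j) * ...]. *)
Definition lin_quot (c : L) (P : MP) : MP :=
  \sum_(m <- msupp P) P@_m *:
     ((\sum_(k < m i) 'X_i ^+ ((m i).-1 - k) * (c *: 'X_j) ^+ k) * 'X_j ^+ m j).

Lemma lin_quot_decomp c {n P} : P \is n.-homog ->
  P = lin c * lin_quot c P + P.@[chart_pt c] *: 'X_j ^+ n.
Proof.
move=> P_homog; rewrite {1}[P]mpolyE meval_chart /lin_quot mulr_sumr scaler_suml.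
rewrite -big_split /= !big_seq; apply: eq_bigr => m m_supp.
rewrite monomial2E -[('X_i : MP) ^+ m i](subrK ((c *: 'X_j) ^+ m i)) subrXX.
rewrite mulrDl scalerDr -scalerAr mulrA exprZn -scalerAl -exprD scalerA.
by rewrite -mdeg2E (dhomog_mf P_homog m_supp).
Qed.

Lemma coef_le_lin_quot {g c P} :
  abs c <= 1 -> coef_le abs g P -> coef_le abs g (lin_quot c P).
Proof.
move=> c_le P_le; have g_ge0 := coef_le_ge0 abs_na P_le.
apply: (coef_le_sum abs_na) => // m _.
set B := (X in P@_m *: X); suff B_le : coef_le abs 1 B.
  by apply: coef_leW (coef_leZ abs_na _ B_le); rewrite mulr1.
apply: (coef_le1M abs_na); last exact: coef_le_Xn.
apply: (coef_le_sum abs_na) => // k _; apply: (coef_le1M abs_na); first exact: coef_le_Xn.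
rewrite exprZn; apply: (coef_leZ1 abs_na); last exact: coef_le_Xn.
by rewrite absX // exprn_ile1 ?abs_ge0.
Qed.

Section SeminormBound.
Context {s : MP -> R}.
Hypothesis s_ms : mult_seminorm abs s.
Hypothesis sXi_le : s 'X_i <= s 'X_j.
Local Notation S := (s 'X_j).

Lemma sn_Xn_le k n : s 'X_k <= S -> s ('X_k ^+ n) <= S ^+ n.
Proof. by move=> sXk_le; rewrite (snX abs_na s_ms) lerXn2r ?nnegrE ?(sn_ge0 s_ms). Qed.

Lemma sn_monomial_le m : s 'X_[m] <= S ^+ mdeg m.
Proof.
by rewrite mdeg2E exprD monomial2E (snM s_ms) ler_pM ?(sn_ge0 s_ms) ?sn_Xn_le.
Qed.

Lemma sn_homog_le {g n P} : coef_le abs g P -> P \is n.-homog -> s P <= g * S ^+ n.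
Proof.
move=> P_le P_homog; rewrite {1}[P]mpolyE big_seq.
apply: (sn_sum_le abs_na s_ms) => [|m m_supp].
  by rewrite mulr_ge0 ?exprn_ge0 ?(sn_ge0 s_ms) ?(coef_le_ge0 abs_na P_le).
rewrite (snZ s_ms) -(dhomog_mf P_homog m_supp) ler_pM ?abs_ge0 ?(sn_ge0 s_ms) //.
exact: sn_monomial_le.
Qed.

Lemma sn_lin_quot_le {g c n P} : abs c <= 1 -> coef_le abs g P -> P \is n.-homog ->
  s (lin_quot c P) <= g * S ^+ n.-1.
Proof.
move=> c_le P_le P_homog; have g_ge0 := coef_le_ge0 abs_na P_le.
rewrite /lin_quot big_seq; apply: (sn_sum_le abs_na s_ms) => [|m m_supp].
  by rewrite mulr_ge0 ?exprn_ge0 ?(sn_ge0 s_ms).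
rewrite (snZ s_ms) ler_pM ?abs_ge0 ?(sn_ge0 s_ms) //.
have : (m i + m j)%N = n by rewrite -mdeg2E (dhomog_mf P_homog m_supp).
rewrite (snM s_ms); case: (m i) => [|a] <-.
  by rewrite big_ord0 (sn0 abs_na s_ms) mul0r exprn_ge0 ?(sn_ge0 s_ms).
rewrite addSn /= exprD ler_pM ?(sn_ge0 s_ms) ?sn_Xn_le //.
apply: (sn_sum_le abs_na s_ms) => [|k _]; first by rewrite exprn_ge0 ?(sn_ge0 s_ms).
have k_le : (k <= a)%N by rewrite -ltnS.
rewrite (snM s_ms) (snX abs_na s_ms (c *: _)) (snZ s_ms).
have -> : S ^+ a = S ^+ (a - k) * S ^+ k by rewrite -exprD subnK.
rewrite ler_pM ?exprn_ge0 ?mulr_ge0 ?abs_ge0 ?(sn_ge0 s_ms) ?sn_Xn_le //.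
rewrite lerXn2r ?nnegrE ?mulr_ge0 ?abs_ge0 ?(sn_ge0 s_ms) //.
exact: ler_piMl (sn_ge0 s_ms _) c_le.
Qed.

End SeminormBound.

Lemma abs_meval_chart_le {z g n P} : abs z <= 1 -> coef_le abs g P -> P \is n.-homog ->
  abs P.@[chart_pt z] <= g.
Proof.
move=> z_le P_le P_homog.
have := sn_homog_le (eval_seminorm_ms (chart_pt z) abs_na) _ P_le P_homog.
by rewrite /= !mevalXU chart_pt_i chart_pt_j abs1 // expr1n mulr1; apply.
Qed.

Lemma abs_meval_lin_quot_le {z g c n P} : abs z <= 1 -> abs c <= 1 ->
  coef_le abs g P -> P \is n.-homog -> abs (lin_quot c P).@[chart_pt z] <= g.
Proof.
move=> z_le c_le P_le P_homog.
have := sn_lin_quot_le (eval_seminorm_ms (chart_pt z) abs_na) _ c_le P_le P_homog.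
by rewrite /= !mevalXU chart_pt_i chart_pt_j abs1 // expr1n mulr1; apply.
Qed.

Lemma red_eq_lin_quot {d c P} : P \is d.-homog -> abs P.@[chart_pt c] < 1 ->
  red_eq abs P (lin c * lin_quot c P).
Proof.
move=> P_homog P_lt1 m; rewrite {1}(lin_quot_decomp c P_homog) addrC addKr.
rewrite mcoeffZ absM //; apply: le_lt_trans P_lt1.
by rewrite ler_piMr ?abs_ge0 ?(coef_le_Xn abs_na).
Qed.

(* A residue point where both reductions vanish would give a common linear
   factor [X_i - c X_j] of the reductions. *)
Lemma good_reduction_chart {d Fi Fj c} :
  good_reduction abs Fi Fj -> Fi \is d.-homog -> Fj \is d.-homog ->
  integral_mpoly abs Fi -> integral_mpoly abs Fj -> abs c <= 1 ->
  abs Fi.@[chart_pt c] < 1 -> abs Fj.@[chart_pt c] < 1 -> False.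
Proof.
move=> good Fi_homog Fj_homog Fi_int Fj_int c_le Fi_lt1 Fj_lt1.
have Ui_neq0 : U_(i)%MM != 0%MM by rewrite -mdeg_eq0 mdeg1.
have := good _ _ _ (coef_le_lin c_le) (coef_le_lin_quot c_le Fi_int)
  (coef_le_lin_quot c_le Fj_int) (red_eq_lin_quot Fi_homog Fi_lt1)
  (red_eq_lin_quot Fj_homog Fj_lt1) _ Ui_neq0.
by rewrite lin_coef_Xi abs1 // ltxx.
Qed.

Lemma lin_quot_root c {n P} : P \is n.-homog -> P.@[chart_pt c] = 0 ->
  P = lin c * lin_quot c P.
Proof.
by move=> P_homog P_c; rewrite {1}(lin_quot_decomp c P_homog) P_c scale0r addr0.
Qed.

Definition chart_poly (P : MP) : {poly L} := \sum_(m <- msupp P) P@_m *: 'X^(m i).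

Lemma chart_polyE P z : (chart_poly P).[z] = P.@[chart_pt z].
Proof.
rewrite /chart_poly horner_sum meval_chart; apply: eq_bigr => m _.
by rewrite hornerZ hornerXn.
Qed.

Section ChartSeminorm.
Context {s : MP -> R}.
Hypothesis s_ms : mult_seminorm abs s.

Lemma sn_lin_lt_max {c} : abs c <= 1 -> s (lin c) < Num.max (s 'X_i) (s 'X_j) ->
  s 'X_i <= s 'X_j /\ s (lin c) < s 'X_j.
Proof.
move=> c_le lin_lt.
suff sXi_le : s 'X_i <= s 'X_j by split; rewrite // -(max_r sXi_le).
rewrite leNgt; apply/negP => sXj_lt; move: lin_lt; rewrite max_l ?ltW //.
have := snD_max abs_na s_ms (lin c) (c *: 'X_j); rewrite subrK (snZ s_ms).
rewrite le_max => /orP[/le_lt_trans/[apply]|]; first by rewrite ltxx.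
move=> /le_trans/(_ (ler_piMl (sn_ge0 s_ms _) c_le)).
by rewrite leNgt sXj_lt.
Qed.

Lemma sn_homog_lin_null c : s (lin c) = 0 ->
  forall n G, G \is n.-homog -> s G = s 'X_j ^+ n * abs G.@[chart_pt c].
Proof.
move=> lin0 n G G_homog; rewrite {1}(lin_quot_decomp c G_homog).
rewrite (snD_null abs_na s_ms) ?(snM s_ms) ?lin0 ?mul0r //.
by rewrite (snZ s_ms) (snX abs_na s_ms) mulrC.
Qed.

End ChartSeminorm.

End Chart.

Arguments chart_pt {L} i c.
Arguments lin_quot {L} i j c P.
Arguments chart_poly {L} i P.

Lemma poly_root_near {R : realType} {L : closedFieldType} {abs : L -> R} :
  nonarch_abs abs -> forall (p : {poly L}) (c w : L),
  abs w < 1 -> abs p.[c] < abs p.[c + w] -> exists2 r, root p r & abs (r - c) < 1.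
Proof.
move=> abs_na p c w w_lt1 p_lt; have [rs p_eq] := closed_field_poly_normal p.
have pE x : p.[x] = lead_coef p * \prod_(r <- rs) (x - r).
  by rewrite {1}p_eq hornerZ horner_prod; under eq_bigr do rewrite hornerXsubC.
have [/hasP[r r_in r_near]|/hasPn r_far] := boolP (has (fun r => abs (r - c) < 1) rs).
  exists r => //; apply/rootP.
  by rewrite pE (big_rem r r_in) /= subrr mul0r mulr0.
suff p_eq' : abs p.[c + w] = abs p.[c] by rewrite p_eq' ltxx in p_lt.
rewrite !pE !absM // !(abs_prod abs_na); congr (_ * _).
apply: eq_big_seq => r /r_far; rewrite -leNgt => r_far'.
rewrite addrAC addrC absD_small // (lt_le_trans w_lt1) //.
by rewrite -opprB absN.
Qed.

Section CriticalFixedResiduePoint.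
Context {R : realType} {L : closedFieldType} {abs : L -> R}.
Hypothesis abs_na : nonarch_abs abs.
Local Notation MP := {mpoly L[2]}.
Context {i j : 'I_2}.
Hypothesis neq_ij : i != j.
Local Notation lin c := ('X_i - c *: 'X_j : MP).
Local Notation pt := (chart_pt i).
Context {d : nat} {Fi Fj : MP}.
Hypotheses (d_ge2 : (2 <= d)%N) (Fi_homog : Fi \is d.-homog)
  (Fj_homog : Fj \is d.-homog).
Hypotheses (Fi_int : integral_mpoly abs Fi) (Fj_int : integral_mpoly abs Fj).
Hypothesis good : good_reduction abs Fi Fj.
Context {c0 : L} {Q0 E0 : MP} {e : L}.
Hypotheses (c0_le : abs c0 <= 1) (Q0_int : integral_mpoly abs Q0)
  (Q0_homog : Q0 \is (d - 2).-homog).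
Hypotheses (E0_homog : E0 \is d.-homog) (e_lt1 : abs e < 1)
  (E0_le : coef_le abs (abs e) E0).
Hypothesis Fi_crit : Fi - c0 *: Fj = lin c0 ^+ 2 * Q0 + E0.

Lemma abs_le1_near {z} : abs (z - c0) < 1 -> abs z <= 1.
Proof.
move=> z_near; rewrite -(subrK c0 z); apply: le_trans (absD_max abs_na _ _) _.
by rewrite ge_max c0_le ltW.
Qed.

Lemma lin_sqM_Q0_homog c : lin c ^+ 2 * Q0 \is d.-homog.
Proof.
by have := dhomogM (dhomogMn 2 (lin_homog c)) Q0_homog; rewrite mul1n subnKC.
Qed.

Lemma meval_Fi_crit z :
  Fi.@[pt z] - c0 * Fj.@[pt z] = (z - c0) ^+ 2 * Q0.@[pt z] + E0.@[pt z].
Proof.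
have := congr1 (meval (pt z)) Fi_crit.
by rewrite mevalB mevalZ mevalD mevalM rmorphXn /= (meval_lin neq_ij).
Qed.

Lemma abs_meval_Fj_c0 : abs Fj.@[pt c0] = 1.
Proof.
have Fj_le : abs Fj.@[pt c0] <= 1 :=
  abs_meval_chart_le abs_na neq_ij c0_le Fj_int Fj_homog.
apply/eqP; rewrite eq_le Fj_le /= leNgt; apply/negP => Fj_lt1.
apply: (good_reduction_chart abs_na neq_ij good Fi_homog Fj_homog Fi_int Fj_int c0_le
  _ Fj_lt1).
have := meval_Fi_crit c0; rewrite subrr expr0n mul0r add0r => Fi_eq.
rewrite -(subrK (c0 * Fj.@[pt c0]) Fi.@[_]) Fi_eq.
apply: le_lt_trans (absD_max abs_na _ _) _; rewrite gt_max absM //.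
rewrite (le_lt_trans (abs_meval_chart_le abs_na neq_ij c0_le E0_le E0_homog)) //=.
by rewrite (le_lt_trans _ Fj_lt1) // ler_piMl ?abs_ge0.
Qed.

Lemma abs_meval_Fj_near z : abs (z - c0) < 1 -> abs Fj.@[pt z] = 1.
Proof.
move=> z_near; have z_le := abs_le1_near z_near.
rewrite {1}(lin_quot_decomp neq_ij c0 Fj_homog) mevalD mevalM (meval_lin neq_ij).
rewrite (meval_scaleXjn neq_ij) absD_small ?abs_meval_Fj_c0 // absM //.
apply: le_lt_trans z_near; rewrite ler_piMr ?abs_ge0 //.
exact: (abs_meval_lin_quot_le abs_na neq_ij z_le c0_le Fj_int Fj_homog).
Qed.

Definition fixed_poly : {poly L} := chart_poly i Fi - 'X * chart_poly i Fj.

Lemma fixed_polyE z : fixed_poly.[z] = Fi.@[pt z] - z * Fj.@[pt z].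
Proof. by rewrite /fixed_poly !hornerE !(chart_polyE neq_ij). Qed.

(* The double root of the reduction at [c0] makes [fixed_poly] grow like [w]
   at distance [w] from [c0], above the size [e] of the perturbation. *)
Lemma abs_fixed_poly_near w : abs e < abs w -> abs w < 1 ->
  abs fixed_poly.[c0 + w] = abs w.
Proof.
move=> e_lt_w w_lt1; set z := c0 + w.
have zc0 : z - c0 = w by rewrite /z addrC addKr.
have z_near : abs (z - c0) < 1 by rewrite zc0.
have z_le := abs_le1_near z_near.
have -> : fixed_poly.[z] = w ^+ 2 * Q0.@[pt z] + E0.@[pt z] - w * Fj.@[pt z].
  by rewrite -zc0 -meval_Fi_crit fixed_polyE; ring.
rewrite (absD_small abs_na) (absN abs_na) (absM abs_na) abs_meval_Fj_near ?mulr1 //.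
apply: le_lt_trans (absD_max abs_na _ _) _; rewrite gt_max absM // absX //.
rewrite (le_lt_trans (abs_meval_chart_le abs_na neq_ij z_le E0_le E0_homog)) // andbT.
have Q0_le : abs Q0.@[pt z] <= 1 :=
  abs_meval_chart_le abs_na neq_ij z_le Q0_int Q0_homog.
have := abs_ge0 abs_na Q0.@[pt z]; have := le_lt_trans (abs_ge0 abs_na e) e_lt_w; nra.
Qed.

Lemma fixed_point_near :
  exists2 c, abs (c - c0) < 1 & Fi.@[pt c] = c * Fj.@[pt c].
Proof.
suff [c /rootP] : exists2 c, root fixed_poly c & abs (c - c0) < 1.
  by rewrite fixed_polyE => /eqP; rewrite subr_eq0 => /eqP; exists c.
have [p_c0|p_c0_neq0] := eqVneq fixed_poly.[c0] 0.
  by exists c0; rewrite ?subrr ?abs0 //; apply/rootP.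
have p_c0_le : abs fixed_poly.[c0] <= abs e.
  rewrite fixed_polyE meval_Fi_crit subrr expr0n mul0r add0r.
  exact: (abs_meval_chart_le abs_na neq_ij c0_le E0_le E0_homog).
have e_gt0 : 0 < abs e.
  apply: lt_le_trans p_c0_le; rewrite lt_def abs_ge0 // andbT.
  by apply: contra p_c0_neq0 => /eqP /(abs_eq0 abs_na) ->.
have [w w_sq] : exists w, w ^+ 2 = e.
  have [w] := @solve_monicpoly L 2 (nth 0 [:: e]) isT.
  by rewrite !big_ord_recl big_ord0 /= mulr1 mul0r !addr0; exists w.
have abs_w_sq : abs w * abs w = abs e by rewrite -(absM abs_na) -expr2 w_sq.
have w_lt1 : abs w < 1 by move: e_lt1 abs_w_sq (abs_ge0 abs_na w); nra.
have e_lt_w : abs e < abs w by move: e_lt1 e_gt0 abs_w_sq (abs_ge0 abs_na w); nra.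
apply: (poly_root_near abs_na fixed_poly c0 w w_lt1).
by rewrite abs_fixed_poly_near // (le_lt_trans p_c0_le).
Qed.

Lemma coef_le_fixed_remainder {c} : abs (c - c0) < 1 ->
  exists2 g, g < 1 & coef_le abs g (Fi - c *: Fj - lin c ^+ 2 * Q0).
Proof.
move=> c_near; exists (Num.max (abs e) (abs (c - c0))); first by rewrite gt_max e_lt1.
have Fi_eq : Fi = c0 *: Fj + lin c0 ^+ 2 * Q0 + E0 by rewrite -addrA -Fi_crit addrC subrK.
have -> : Fi - c *: Fj - lin c ^+ 2 * Q0 =
    E0 + (c - c0) *: ('X_j * (lin c0 + lin c) * Q0 - Fj).
  by rewrite Fi_eq -!mul_mpolyC !mpolyCB; ring.
apply: (coef_leD abs_na); first by apply: coef_leW E0_le; rewrite le_max lexx.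
have rest_int : coef_le abs 1 ('X_j * (lin c0 + lin c) * Q0 - Fj).
  apply: (coef_leB abs_na _ Fj_int); apply: (coef_le1M abs_na _ Q0_int).
  apply: (coef_le1M abs_na (coef_le_monomial abs_na _)).
  exact: coef_leD (coef_le_lin abs_na c0_le) (coef_le_lin abs_na (abs_le1_near c_near)).
by apply: coef_leW (coef_leZ abs_na _ rest_int); rewrite mulr1 le_max lexx orbT.
Qed.

Lemma fixed_lin_factor {c} : Fi.@[pt c] = c * Fj.@[pt c] ->
  Fi - c *: Fj = lin c * lin_quot i j c (Fi - c *: Fj).
Proof.
move=> Fi_c; apply: (lin_quot_root neq_ij c (n := d)); first by rewrite rpredB ?rpredZ.
by rewrite mevalB mevalZ Fi_c subrr.
Qed.

Section FixedSeminorm.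
Context {s : MP -> R}.
Hypothesis s_ms : mult_seminorm abs s.
Hypotheses (sXi_le : s 'X_i <= s 'X_j) (s_lin_c0_lt : s (lin c0) < s 'X_j).
Context {C : R}.
Hypothesis s_fixed :
  forall a b : L, s (a *: Fi + b *: Fj) = C * s (a *: 'X_i + b *: 'X_j).
Local Notation S := (s 'X_j).

Lemma sn_Xj_gt0 : 0 < S. Proof. exact: le_lt_trans (sn_ge0 s_ms _) s_lin_c0_lt. Qed.

Lemma sn_lin_near {c} : abs (c - c0) < 1 -> s (lin c) < S.
Proof.
move=> c_near; have -> : lin c = lin c0 - (c - c0) *: 'X_j.
  by rewrite scalerBl opprB addrA subrK.
apply: le_lt_trans (snB_max abs_na s_ms _ _) _.
by rewrite gt_max s_lin_c0_lt (snZ s_ms) gtr_pMl ?sn_Xj_gt0.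
Qed.

Lemma sn_fixed_lin c : s (Fi - c *: Fj) = C * s (lin c).
Proof. by have := s_fixed 1 (- c); rewrite !scale1r !scaleNr. Qed.

Lemma sn_lin_mul_lt c n G : s (lin c) < S -> s G <= S ^+ n -> s (lin c * G) < S ^+ n.+1.
Proof.
move=> lin_lt G_le; rewrite (snM s_ms) exprS.
apply: le_lt_trans (ler_wpM2l (sn_ge0 s_ms _) G_le) _.
by rewrite ltr_pM2r ?exprn_gt0 ?sn_Xj_gt0.
Qed.

Lemma fixed_factor_eq : C = S ^+ d.-1.
Proof.
have quot_le : s (lin_quot i j c0 Fj) <= S ^+ d.-1.
  rewrite -[S ^+ _]mul1r.
  exact: (sn_lin_quot_le abs_na neq_ij s_ms sXi_le c0_le Fj_int Fj_homog).
have sFj : s Fj = S * S ^+ d.-1.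
  rewrite {1}(lin_quot_decomp neq_ij c0 Fj_homog) (snD_small abs_na s_ms).
    by rewrite (snZ s_ms) abs_meval_Fj_c0 mul1r (snX abs_na s_ms) -exprS prednK // ltnW.
  rewrite (snZ s_ms) abs_meval_Fj_c0 mul1r (snX abs_na s_ms) -(prednK (ltnW d_ge2)).
  exact: sn_lin_mul_lt.
have := s_fixed 0 1; rewrite !scale0r !add0r !scale1r sFj mulrC.
by move=> /(mulIf (lt0r_neq0 sn_Xj_gt0)).
Qed.

Lemma sn_lin_quot_fixed_lt {c} :
  abs (c - c0) < 1 -> Fi.@[pt c] = c * Fj.@[pt c] ->
  s (lin_quot i j c (Fi - c *: Fj)) < S ^+ d.-1.
Proof.
move=> c_near Fi_c; have c_le := abs_le1_near c_near.
have [g g_lt1 T_le] := coef_le_fixed_remainder c_near.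
set P := Fi - c *: Fj in Fi_c T_le *; set T := P - lin c ^+ 2 * Q0 in T_le.
have T_homog : T \is d.-homog by rewrite /T /P !rpredB ?rpredZ ?lin_sqM_Q0_homog.
have T_root : T.@[pt c] = 0.
  rewrite /T /P !mevalB mevalZ Fi_c subrr sub0r mevalM rmorphXn /=.
  by rewrite (meval_lin neq_ij) subrr expr0n mul0r oppr0.
have quotE : lin_quot i j c P = lin c * Q0 + lin_quot i j c T.
  apply: (mulfI (lin_neq0 neq_ij c)); rewrite -(fixed_lin_factor Fi_c) -/P mulrDr.
  by rewrite -(lin_quot_root neq_ij c T_homog T_root) mulrA -expr2 /T addrC subrK.
have dE : d.-1 = (d - 2).+1 by rewrite subnSK // subn1.
rewrite quotE; apply: le_lt_trans (snD_max abs_na s_ms _ _) _; rewrite gt_max dE.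
rewrite sn_lin_mul_lt ?sn_lin_near //=; last first.
  by rewrite -[S ^+ _]mul1r (sn_homog_le abs_na neq_ij s_ms sXi_le Q0_int Q0_homog).
apply: le_lt_trans (sn_lin_quot_le abs_na neq_ij s_ms sXi_le c_le T_le T_homog) _.
by rewrite -dE gtr_pMl ?exprn_gt0 ?sn_Xj_gt0.
Qed.

Lemma sn_lin_fixed_eq0 : exists c, s (lin c) = 0.
Proof.
have [c c_near Fi_c] := fixed_point_near; exists c; apply/eqP.
apply: contraTT (sn_lin_quot_fixed_lt c_near Fi_c) => /negPf lin_neq0.
have := sn_fixed_lin c; rewrite fixed_factor_eq {1}(fixed_lin_factor Fi_c) (snM s_ms).
by rewrite mulrC => /(mulIf (negbT lin_neq0)) ->; rewrite ltxx.
Qed.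

End FixedSeminorm.

End CriticalFixedResiduePoint.

Lemma type1_point_meval {R : realType} {L : fieldType} {abs : L -> R}
    (s : {mpoly L[2]} -> R) (v : 'I_2 -> L) (k : 'I_2) :
  v k != 0 -> berk_equiv s (fun G => abs G.@[v]) -> type1_point abs s.
Proof.
have vE : (fun k : 'I_2 => if val k == 0%N then v ord0 else v ord_max) =1 v.
  by case=> [[|[|//]] ?]; congr v; apply: val_inj.
move=> vk_neq0 [C [C_gt0 s_eq]]; exists (v ord0), (v ord_max); split.
  case: k vk_neq0 => [[|[|//]] k_lt] vk;
    [left; rewrite (_ : ord0 = Ordinal k_lt) | right; rewrite (_ : ord_max = Ordinal k_lt)];
    by [|apply: val_inj].
exists C; split=> // n G G_homog.
by rewrite (s_eq n G G_homog) /eval_seminorm (meval_eq _ vE).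
Qed.

Section FixedDirectionChart.
Context {R : realType} {L : closedFieldType} {abs : L -> R}.
Hypothesis abs_na : nonarch_abs abs.
Local Notation MP := {mpoly L[2]}.
Context {i j : 'I_2}.
Hypothesis neq_ij : i != j.
Local Notation lin c := ('X_i - c *: 'X_j : MP).
Context {d : nat} {Fi Fj : MP}.
Hypotheses (d_ge2 : (2 <= d)%N) (Fi_homog : Fi \is d.-homog)
  (Fj_homog : Fj \is d.-homog).
Hypotheses (Fi_int : integral_mpoly abs Fi) (Fj_int : integral_mpoly abs Fj).
Hypothesis good : good_reduction abs Fi Fj.
Context {a b : L} {Q : MP}.
Hypotheses (a_le : abs a <= 1) (b1 : abs b = 1) (Q_int : integral_mpoly abs Q).
Hypothesis crit : red_eq abs (b *: Fi - a *: Fj) ((b *: 'X_i - a *: 'X_j) ^+ 2 * Q).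
Context {s : MP -> R} {C : R}.
Hypothesis s_ms : mult_seminorm abs s.
Hypothesis s_dir : s (b *: 'X_i - a *: 'X_j) < Num.max (s 'X_i) (s 'X_j).
Hypothesis s_fixed :
  forall x y : L, s (x *: Fi + y *: Fj) = C * s (x *: 'X_i + y *: 'X_j).

Lemma fixed_in_direction_chart :
  exists c, berk_equiv s (fun G => abs G.@[chart_pt i c]).
Proof.
pose c0 := a / b; have c0_le : abs c0 <= 1 by rewrite absM // absV_unit // mulr1.
have b_c0 : b * c0 = a by rewrite /c0 mulrC divfK // (abs_neq0 abs_na b1).
have lin_scale : b *: 'X_i - a *: 'X_j = b *: lin c0.
  by rewrite scalerBr scalerA b_c0.
have [sXi_le lin_lt] : s 'X_i <= s 'X_j /\ s (lin c0) < s 'X_j.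
  apply: (sn_lin_lt_max abs_na s_ms c0_le).
  by rewrite -[s _]mul1r -b1 -(snZ s_ms) -lin_scale.
have crit0 : red_eq abs (Fi - c0 *: Fj) (lin c0 ^+ 2 * (b *: Q)).
  apply: (red_eq_unscale abs_na b1); move: crit.
  have -> : b *: Fi - a *: Fj = b *: (Fi - c0 *: Fj) by rewrite scalerBr scalerA b_c0.
  by rewrite lin_scale exprZn -scalerAl -scalerAr scalerA expr2.
have lin_sq_homog : lin c0 ^+ 2 \is 2.-homog.
  by have := dhomogMn 2 (lin_homog c0); rewrite mul1n.
have Fd_homog : Fi - c0 *: Fj \is (2 + (d - 2)).-homog by rewrite subnKC // rpredB ?rpredZ.
have bQ_int : integral_mpoly abs (b *: Q) by apply: (coef_leZ1 abs_na) => //; rewrite b1.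
have [Q0 [E0 [e [Q0_int Q0_homog E0_homog e_lt1 [E0_le Fi_crit]]]]] :=
  homog_red_decomp abs_na Fd_homog lin_sq_homog bQ_int crit0.
rewrite subnKC // in E0_homog.
have [c lin_c] := sn_lin_fixed_eq0 abs_na neq_ij d_ge2 Fi_homog Fj_homog Fi_int Fj_int good
  c0_le Q0_int Q0_homog E0_homog e_lt1 E0_le Fi_crit s_ms sXi_le lin_lt s_fixed.
exists c, (s 'X_j); split; first exact: le_lt_trans (sn_ge0 s_ms _) lin_lt.
exact: (sn_homog_lin_null abs_na neq_ij s_ms c lin_c).
Qed.

Lemma fixed_in_direction_type1 : type1_point abs s.
Proof.
have [c s_eq] := fixed_in_direction_chart.
by apply: (type1_point_meval s _ j _ s_eq); rewrite chart_pt_j ?oner_neq0.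
Qed.

End FixedDirectionChart.

Lemma berk_fixed_linear {R : realType} {L : fieldType} (F1 F2 : {mpoly L[2]})
    (s : {mpoly L[2]} -> R) :
  berk_fixed F1 F2 s -> exists C : R,
    forall x y : L, s (x *: F1 + y *: F2) = C * s (x *: varX L + y *: varY L).
Proof.
case=> C [_ s_fix]; exists C => x y.
have lin_homog : x *: varX L + y *: varY L \is 1.-homog.
  by rewrite rpredD ?rpredZ // dhomogX /= mdeg1.
have := s_fix 1%N _ lin_homog.
by rewrite expr1 /berk_push comp_mpolyD !comp_mpolyZ !comp_mpolyXU.
Qed.

Lemma good_reduction_sym {R : realType} {L : fieldType} {abs : L -> R}
    {F1 F2 : {mpoly L[2]}} :
  good_reduction abs F1 F2 -> good_reduction abs F2 F1.
Proof. by move=> good D Q1 Q2 D_int Q1_int Q2_int red1 red2; apply: (good D Q2 Q1). Qed.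


Theorem lemma3p8 (R : realType) (L : closedFieldType) (abs : L -> R) :
  nonarch_abs abs -> abs_complete abs -> [pchar L] =i pred0 ->
  forall (d : nat) (F1 F2 : {mpoly L[2]}),
    (2 <= d)%N -> rat_map_lift d F1 F2 ->
    normalized_lift abs F1 F2 -> good_reduction abs F1 F2 ->
  forall a b : L, direction_lift abs a b -> fixed_critical_red abs F1 F2 a b ->
  forall s : {mpoly L[2]} -> R,
    berk_point abs s -> in_direction a b s -> berk_fixed F1 F2 s ->
    type1_point abs s.
Proof.
move=> abs_na _ _ d F1 F2 d_ge2 [F1_homog F2_homog _] [F1_int F2_int _] good a b
  [a_le [b_le ab_max]] [Q [Q_int crit]] s [s_ms _] s_dir /berk_fixed_linear [C s_lin].
pose i0 : 'I_2 := @Ordinal 2 0 isT; pose i1 : 'I_2 := @Ordinal 2 1 isT.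
have [ab|/ltW ba] := leP (abs a) (abs b).
  have b1 : abs b = 1 by rewrite -(max_r ab).
  exact: (fixed_in_direction_type1 abs_na (i := i0) (j := i1) isT d_ge2
    F1_homog F2_homog F1_int F2_int good a_le b1 Q_int crit s_ms s_dir s_lin).
have a1 : abs a = 1 by rewrite -(max_l ba).
have swap_lin (x y : L) (P1 P2 : {mpoly L[2]}) :
    (- x) *: P2 - (- y) *: P1 = y *: P1 - x *: P2.
  by rewrite !scaleNr opprK addrC.
have crit' : red_eq abs ((- a) *: F2 - (- b) *: F1)
    (((- a) *: 'X_i1 - (- b) *: 'X_i0) ^+ 2 * Q).
  by rewrite !swap_lin.
have s_dir' : s ((- a) *: 'X_i1 - (- b) *: 'X_i0) < Num.max (s 'X_i1) (s 'X_i0).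
  by rewrite swap_lin maxC.
have s_lin' x y : s (x *: F2 + y *: F1) = C * s (x *: 'X_i1 + y *: 'X_i0).
  by rewrite addrC s_lin addrC.
have [nb_le na1] : abs (- b) <= 1 /\ abs (- a) = 1 by rewrite !absN.
exact: (fixed_in_direction_type1 abs_na (i := i1) (j := i0) isT d_ge2
  F2_homog F1_homog F2_int F1_int (good_reduction_sym good) nb_le na1 Q_int crit' s_ms
  s_dir' s_lin').
Qed.
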